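(* Let $(K_n,\Sigma)$ be a signed complete graph with $n\geq4$. For a sign $\Gamma\subseteq E(K_n)$, let $X(\Gamma)$ be the set of edges $vw$ of $K_n$ such that the triangle $uvw$ is even in $(K_n,\Gamma)$ for every $u\in V(K_n)\setminus\{v,w\}$, and let $Y(\Gamma)$ be the set of edges $vw$ of $K_n$ such that for every $u\in V(K_n)\setminus\{v,w\}$, $uvw$ is odd in $(K_n,\Gamma)$ and the number of odd triangles of $(K_n,\Gamma)$ containing $u$ and $v$ is one more than the number of even triangles of $(K_n,\Gamma)$ containing $u$ and $v$. If $Y(\Sigma)\neq\emptyset$, then $X(\Sigma)\cup Y(\Sigma)=X(\Sigma\triangle Y(\Sigma))$ and $Y(\Sigma\triangle Y(\Sigma))=\emptyset$.
   Context: A signed graph is a pair $(G,\Sigma)$ with $G$ a finite simple graph and $\Sigma\subseteq E(G)$ (the odd edges). A triangle $uvw$ is odd (resp. even) in $(G,\Sigma)$ if $|\Sigma\cap\{uv,uw,vw\}|$ is odd (resp. even). $\triangle$ denotes symmetric difference. *)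

From mathcomp Require Import all_boot.
Set Implicit Arguments. Unset Strict Implicit. Unset Printing Implicit Defensive.

Definition edges (n : nat) : {set {set 'I_n}} :=
  [set e : {set 'I_n} | #|e| == 2].

(* A sign is a set of edges (the odd edges). *)
Definition odd_tri n (G : {set {set 'I_n}}) (u v w : 'I_n) : bool :=
  odd #|G :&: [set [set u; v]; [set u; w]; [set v; w]]|.

Definition n_odd_tri n (G : {set {set 'I_n}}) (u v : 'I_n) : nat :=
  #|[set x : 'I_n | (x != u) && (x != v) && odd_tri G u v x]|.
Definition n_even_tri n (G : {set {set 'I_n}}) (u v : 'I_n) : nat :=
  #|[set x : 'I_n | (x != u) && (x != v) && ~~ odd_tri G u v x]|.

Definition Xset n (G : {set {set 'I_n}}) : {set {set 'I_n}} :=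
  [set e in edges n | [forall v, forall w, (e == [set v; w]) ==>
     [forall u, ((u != v) && (u != w)) ==> ~~ odd_tri G u v w]]].

(* For an edge e = vw: for every u outside {v,w}, uvw is odd and
   #odd triangles through u,v = #even triangles through u,v + 1.
   The condition is required for every labelling e = {v,w}. *)
Definition Yset n (G : {set {set 'I_n}}) : {set {set 'I_n}} :=
  [set e in edges n | [forall v, forall w, (e == [set v; w]) ==>
     [forall u, ((u != v) && (u != w)) ==>
        (odd_tri G u v w && (n_odd_tri G u v == (n_even_tri G u v).+1))]]].

Definition symdiff (T : finType) (A B : {set T}) : {set T} := (A :\: B) :|: (B :\: A).

(* Y = Y(Σ) is a matching: if vw and vx were both in Y, every triangle on xv
   would be odd, whereas vw ∈ Y makes exactly (n-1)/2 of the n-2 triangles on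
   xv odd.  Hence a triangle is odd in (K_n, Y) iff it contains an edge of Y, and
   every such triangle is odd in Σ; so switching Σ by Y turns exactly these
   triangles even, which gives X(Σ) ∪ Y ⊆ X(Σ△Y).  If conversely vw ∈ X(Σ△Y)
   is not in Y but some triangle uvw is odd in Σ, then w.l.o.g. uv ∈ Y; the
   (n-1)/2 odd triangles on wv all contain a Y-edge, so they are wvu and wvz for
   the Y-partner z of w, which forces n = 5, and a fifth vertex x then violates
   the triangle counts on xv or zv.  Finally, if vw ∈ Y(Σ△Y) and ab ∈ Y with
   a ∉ {v, w}, the odd triangles on av in Σ△Y are among those in Σ except avb,
   yet both counts equal (n-1)/2; so every Y-edge is vw, and vw cannot lie in
   both X(Σ△Y) and Y(Σ△Y). *)

From mathcomp Require Import all_boot zify.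
Set Implicit Arguments. Unset Strict Implicit. Unset Printing Implicit Defensive.

Lemma odd_card_setI3 (T : finType) (G : {set T}) (a b c : T) :
  uniq [:: a; b; c] ->
  odd #|G :&: [set a; b; c]| = (a \in G) (+) (b \in G) (+) (c \in G).
Proof.
move=> abc.
have -> : G :&: [set a; b; c] = [set x in [seq x <- [:: a; b; c] | x \in G]].
  by apply/setP=> x; rewrite !inE mem_filter !inE orbA.
rewrite cardsE (card_uniqP _) ?filter_uniq // size_filter /=.
by rewrite addn0 !oddD !oddb addbA.
Qed.

Lemma set2_eq_cases (T : finType) (a b c d : T) : a != b ->
  [set a; b] = [set c; d] -> (c = a /\ d = b) \/ (c = b /\ d = a).
Proof.
move=> ab E.
have: c \in [set a; b] by rewrite E set21.
have: d \in [set a; b] by rewrite E set22.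
rewrite !inE => /pred2P[] dE /pred2P[] cE; subst c d.
- by move: (set22 a b); rewrite E setUid inE eq_sym (negbTE ab).
- by right.
- by left.
- by move: (set21 a b); rewrite E setUid inE (negbTE ab).
Qed.

Lemma exists_notin (T : finType) (s : seq T) : size s < #|T| -> exists x, x \notin s.
Proof.
move=> small; have /subsetPn[x _ xs] : ~~ (T \subset s); last by exists x.
apply: contraTN small => /subset_leq_card T_le_s.
by rewrite -leqNgt (leq_trans T_le_s) ?card_size.
Qed.

Section Triangles.

Variable n : nat.
Implicit Types (G H : {set {set 'I_n}}) (u v w x : 'I_n).

Lemma in_edges2 v w : ([set v; w] \in edges n) = (v != w).
Proof. by rewrite inE cards2; case: (v != w). Qed.

Lemma odd_tri_addb G u v w : u != v -> u != w -> v != w ->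
  odd_tri G u v w = ([set u; v] \in G) (+) ([set u; w] \in G) (+) ([set v; w] \in G).
Proof.
move=> uv uw vw; rewrite /odd_tri odd_card_setI3 //=.
have neq_set2 (A B : {set 'I_n}) y : y \in B -> y \notin A -> A != B.
  by move=> yB; apply: contraNneq => ->.
have wuv : w \notin [set u; v] by rewrite !inE negb_or !(eq_sym w) uw vw.
have vuw : v \notin [set u; w] by rewrite !inE negb_or (eq_sym v) uv vw.
rewrite !inE negb_or !andbT.
by rewrite (neq_set2 _ _ w) ?set22 // (neq_set2 _ _ w) ?set22 // (neq_set2 _ _ v) ?set21.
Qed.

Lemma odd_triCl G u v w : odd_tri G u v w = odd_tri G v u w.
Proof. by rewrite /odd_tri (setUC [set v] [set u]) setUAC. Qed.

Lemma odd_triCr G u v w : odd_tri G u v w = odd_tri G u w v.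
Proof. by rewrite /odd_tri (setUC [set w] [set v]) (setUC [set [set u; w]]). Qed.

Lemma odd_tri_rev G u v w : odd_tri G u v w = odd_tri G w v u.
Proof. by rewrite odd_triCl odd_triCr odd_triCl. Qed.

Lemma odd_tri_symdiff G H u v w : u != v -> u != w -> v != w ->
  odd_tri (symdiff G H) u v w = odd_tri G u v w (+) odd_tri H u v w.
Proof.
have in_symdiff e : (e \in symdiff G H) = (e \in G) (+) (e \in H).
  by rewrite !inE; case: (e \in G); case: (e \in H).
move=> uv uw vw; rewrite !odd_tri_addb // !in_symdiff.
by rewrite [RHS]addbACA [X in X (+) _]addbACA.
Qed.

Lemma n_odd_even_tri G u v : u != v -> n_odd_tri G u v + n_even_tri G u v = n - 2.
Proof.
move=> uv; set A := ~: [set u; v].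
have -> : n_odd_tri G u v = #|A :&: [set x | odd_tri G u v x]|.
  by apply: eq_card => x; rewrite !inE negb_or.
have -> : n_even_tri G u v = #|A :\: [set x | odd_tri G u v x]|.
  by apply: eq_card => x; rewrite !inE negb_or andbC.
by rewrite cardsID cardsCs setCK card_ord cards2 uv.
Qed.

Lemma in_edgesP (e : {set 'I_n}) :
  reflect (exists v w, v != w /\ e = [set v; w]) (e \in edges n).
Proof. by rewrite inE; apply: cards2P. Qed.

Lemma Xset_sub_edges G : Xset G \subset edges n.
Proof. by apply/subsetP => e /setIdP[]. Qed.

Lemma Yset_sub_edges G : Yset G \subset edges n.
Proof. by apply/subsetP => e /setIdP[]. Qed.

Lemma Xset_neq G v w : [set v; w] \in Xset G -> v != w.
Proof. by rewrite -in_edges2; apply: (subsetP (Xset_sub_edges G)). Qed.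

Lemma Yset_neq G v w : [set v; w] \in Yset G -> v != w.
Proof. by rewrite -in_edges2; apply: (subsetP (Yset_sub_edges G)). Qed.

Lemma XsetP G v w : v != w ->
  reflect (forall u, u != v -> u != w -> ~~ odd_tri G u v w) ([set v; w] \in Xset G).
Proof.
move=> vw; apply: (iffP setIdP) => [[_] | even_vw].
  move=> /forallP/(_ v)/forallP/(_ w)/implyP/(_ (eqxx _)) even_vw u uv uw.
  by move/forallP/(_ u)/implyP: even_vw; apply; rewrite uv uw.
split; first by rewrite in_edges2.
apply/forallP => a; apply/forallP => b; apply/implyP => /eqP/(set2_eq_cases vw).
case=> [[-> ->] | [-> ->]]; apply/forallP => u; apply/implyP => /andP[ua ub].
  exact: even_vw.
by rewrite odd_triCr; apply: even_vw.
Qed.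

Lemma Yset_tri G v w u : [set v; w] \in Yset G -> u != v -> u != w ->
  odd_tri G u v w /\ n_odd_tri G u v = (n_even_tri G u v).+1.
Proof.
case/setIdP => _ /forallP/(_ v)/forallP/(_ w)/implyP/(_ (eqxx _))/forallP/(_ u).
by move=> /implyP Yu uv uw; case/andP: (Yu (introT andP (conj uv uw))) => ? /eqP.
Qed.

Lemma Yset_odd_tri G v w u : [set v; w] \in Yset G -> u != v -> u != w ->
  odd_tri G u v w.
Proof. by move=> vwY uv uw; case: (Yset_tri vwY uv uw). Qed.

Lemma Yset_n_odd_tri G v w u : [set v; w] \in Yset G -> u != v -> u != w ->
  (n_odd_tri G u v).*2 = n - 1.
Proof.
move=> vwY uv uw; have [_ odd_even] := Yset_tri vwY uv uw.
have := n_odd_even_tri G uv; lia.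
Qed.

Lemma Yset_n_even_tri G v w u : [set v; w] \in Yset G -> u != v -> u != w ->
  (n_even_tri G u v).*2 = n - 3.
Proof.
move=> vwY uv uw; have [_ odd_even] := Yset_tri vwY uv uw.
have := n_odd_even_tri G uv; lia.
Qed.

Lemma Yset_matching G v w x : 4 <= n ->
  [set v; w] \in Yset G -> [set v; x] \in Yset G -> w = x.
Proof.
move=> n_ge4 vwY vxY; apply/eqP; apply: contraTT n_ge4 => wx.
have xv : x != v by rewrite eq_sym (Yset_neq vxY).
have no_even : n_even_tri G x v = 0.
  apply/eqP; rewrite cards_eq0; apply/eqP/setP => y; rewrite !inE.
  apply/negbTE/negP => /andP[/andP[yx yv] /negP]; apply.
  by rewrite odd_tri_rev (Yset_odd_tri vxY yv yx).
have := Yset_n_even_tri vwY xv; rewrite eq_sym wx no_even => /(_ isT).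
lia.
Qed.

Lemma odd_tri_matching (M : {set {set 'I_n}}) u v w :
  (forall a b c, [set a; b] \in M -> [set a; c] \in M -> b = c) ->
  u != v -> u != w -> v != w ->
  odd_tri M u v w = [|| [set u; v] \in M, [set u; w] \in M | [set v; w] \in M].
Proof.
move=> M_matching uv uw vw; rewrite odd_tri_addb //.
have not_both a b c : b != c -> ~~ (([set a; b] \in M) && ([set a; c] \in M)).
  by move=> bc; apply/negP => /andP[ab /(M_matching _ _ _ ab) eq_bc]; rewrite eq_bc eqxx in bc.
move: (not_both u v w vw) (not_both v u w uw) (not_both w u v uv).
rewrite !(setUC [set v] [set u]) !(setUC [set w]).
by case: ([set u; v] \in M); case: ([set u; w] \in M); case: ([set v; w] \in M).
Qed.

Lemma Xset_Yset_disjoint G e : 2 < n -> e \in Xset G -> e \notin Yset G.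
Proof.
move=> n_gt2 eX; apply/negP => eY.
have /in_edgesP[v [w [vw def_e]]] := subsetP (Yset_sub_edges G) e eY.
rewrite def_e in eX eY.
have [u] : exists u, u \notin [:: v; w] by apply: exists_notin; rewrite card_ord.
rewrite !inE negb_or => /andP[uv uw].
by move/(XsetP _ vw)/(_ u uv uw): eX; rewrite (Yset_odd_tri eY uv uw).
Qed.

End Triangles.

Section Switching.

Variables (n : nat) (S : {set {set 'I_n}}).
Hypothesis n_ge4 : 4 <= n.
Implicit Types (u v w x : 'I_n).

Local Notation Y := (Yset S).
Local Notation S' := (symdiff S (Yset S)).

Lemma odd_tri_Yset u v w : u != v -> u != w -> v != w ->
  odd_tri Y u v w = [|| [set u; v] \in Y, [set u; w] \in Y | [set v; w] \in Y].
Proof. by apply: odd_tri_matching => a b c; apply: Yset_matching. Qed.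

Lemma odd_tri_Yset_odd u v w : u != v -> u != w -> v != w ->
  odd_tri Y u v w -> odd_tri S u v w.
Proof.
move=> uv uw vw; rewrite odd_tri_Yset // => /or3P[uvY | uwY | vwY].
- by rewrite odd_triCr odd_triCl (Yset_odd_tri uvY) // eq_sym.
- by rewrite odd_triCl (Yset_odd_tri uwY) // eq_sym.
- exact: Yset_odd_tri.
Qed.

Lemma odd_tri_symdiff_Yset u v w : u != v -> u != w -> v != w ->
  odd_tri S' u v w = odd_tri S u v w && ~~ odd_tri Y u v w.
Proof.
move=> uv uw vw; rewrite odd_tri_symdiff //.
have := odd_tri_Yset_odd uv uw vw.
by case: (odd_tri S u v w); case: (odd_tri Y u v w) => // /(_ isT).
Qed.

Lemma Xset_sub_symdiff : Xset S \subset Xset S'.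
Proof.
apply/subsetP => e eX; have /in_edgesP[v [w [vw def_e]]] := subsetP (Xset_sub_edges S) e eX.
rewrite def_e in eX *; apply/XsetP => // u uv uw.
by rewrite odd_tri_symdiff_Yset // (negbTE (XsetP _ vw eX u uv uw)).
Qed.

Lemma Yset_sub_symdiff : Y \subset Xset S'.
Proof.
apply/subsetP => e eY; have /in_edgesP[v [w [vw def_e]]] := subsetP (Yset_sub_edges S) e eY.
rewrite def_e in eY *; apply/XsetP => // u uv uw.
by rewrite odd_tri_symdiff_Yset // odd_tri_Yset // eY !orbT andbF.
Qed.

Lemma Xset_symdiff_odd_tri v w x : [set v; w] \in Xset S' -> [set v; w] \notin Y ->
  x != v -> x != w -> odd_tri S x v w -> ([set x; v] \in Y) || ([set x; w] \in Y).
Proof.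
move=> vwX vwY xv xw odd_xvw.
have vw := Xset_neq vwX.
move/(XsetP _ vw)/(_ x xv xw): vwX.
by rewrite odd_tri_symdiff_Yset // odd_xvw odd_tri_Yset // (negbTE vwY) orbF negbK.
Qed.

Lemma Xset_symdiff_adjacent v w u :
  [set v; w] \in Xset S' -> [set v; w] \notin Y -> u != w -> [set u; v] \in Y ->
  n = 5 /\ exists z, [/\ [set w; z] \in Y, z != u &
                      [set x | (x != w) && (x != v) && odd_tri S w v x] \subset [set u; z]].
Proof.
move=> vwX vwY uw uvY.
have vuY : [set v; u] \in Y by rewrite setUC.
have [wv wu] : w != v /\ w != u by rewrite !(eq_sym w) (Xset_neq vwX).
set T := [set x | _].
have cardT : #|T|.*2 = n - 1 := Yset_n_odd_tri vuY wv wu.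
have partner x : x \in T -> x = u \/ [set w; x] \in Y.
  rewrite inE => /andP[/andP[xw xv] odd_wvx].
  have odd_xvw : odd_tri S x v w by rewrite odd_tri_rev.
  case/orP: (Xset_symdiff_odd_tri vwX vwY xv xw odd_xvw) => [xvY | xwY].
    by left; apply: (Yset_matching n_ge4 _ vuY); rewrite setUC.
  by right; rewrite setUC.
have [z zT zu] : exists2 z, z \in T & z != u.
  have : 0 < #|T :\ u| by move: (cardsD1 u T); clear -cardT n_ge4; lia.
  by rewrite card_gt0 => /set0Pn[z]; rewrite in_setD1 => /andP[zu zT]; exists z.
have wzY : [set w; z] \in Y by case: (partner z zT) zu => [-> | //]; rewrite eqxx.
have T_uz : T \subset [set u; z].
  by apply/subsetP => x /partner[-> | /(Yset_matching n_ge4 wzY) <-]; rewrite !inE eqxx ?orbT.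
split; last by exists z.
by move: (subset_leq_card T_uz); rewrite cards2; clear -cardT n_ge4; lia.
Qed.

Lemma Xset_symdiff_nonadjacent v w u :
  [set v; w] \in Xset S' -> [set v; w] \notin Y -> u != w -> [set u; v] \notin Y.
Proof.
move=> vwX vwY uw; apply/negP => uvY.
have [n5 [z [wzY zu T_uz]]] := Xset_symdiff_adjacent vwX vwY uw uvY.
have vuY : [set v; u] \in Y by rewrite setUC.
have [uv wv wz] : [/\ u != v, w != v & w != z].
  by rewrite (Yset_neq uvY) (Yset_neq wzY) eq_sym (Xset_neq vwX).
have zv : z != v by apply: contraNneq vwY => eq_zv; rewrite setUC -eq_zv.
have [x] : exists x, x \notin [:: v; w; u; z] by apply: exists_notin; rewrite card_ord /= n5.
rewrite !inE !negb_or => /and4P[xv xw xu xz].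
have even_wvx : ~~ odd_tri S w v x.
  apply/negP => odd_wvx; have : x \in [set u; z] by apply: (subsetP T_uz); rewrite inE xw xv.
  by rewrite !inE (negbTE xu) (negbTE xz).
have odd_xvz : odd_tri S x v z.
  apply/negPn/negP => even_xvz.
  have : #|[:: w; z]| <= n_even_tri S x v.
    apply/subset_leq_card/subsetP => y; rewrite !inE => /orP[] /eqP->.
      by rewrite eq_sym xw wv odd_tri_rev.
    by rewrite eq_sym xz zv.
  have wz_uniq : uniq [:: w; z] by rewrite /= inE wz.
  rewrite (card_uniqP wz_uniq) /=.
  by move: (Yset_n_even_tri vuY xv xu); clear -n5; lia.
have : #|[:: u; w; x]| <= n_odd_tri S z v.
  apply/subset_leq_card/subsetP => y; rewrite !inE => /or3P[] /eqP->.
  - by rewrite (eq_sym u) zu uv (Yset_odd_tri vuY).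
  - by rewrite wz wv odd_triCl odd_triCr (Yset_odd_tri wzY) // eq_sym.
  - by rewrite xz xv odd_tri_rev.
have uwx_uniq : uniq [:: u; w; x] by rewrite /= !inE negb_or uw !(eq_sym _ x) xu xw.
rewrite (card_uniqP uwx_uniq) /=.
by move: (Yset_n_odd_tri vuY zv zu); clear -n5; lia.
Qed.

Lemma Xset_symdiff : Xset S' = Xset S :|: Y.
Proof.
apply/eqP; rewrite eqEsubset subUset Xset_sub_symdiff Yset_sub_symdiff !andbT.
apply/subsetP => e eX; rewrite inE; case: (boolP (e \in Y)) => eY; first by rewrite orbT.
have /in_edgesP[v [w [vw def_e]]] := subsetP (Xset_sub_edges S') e eX.
rewrite orbF; rewrite def_e in eX eY *; apply/XsetP => // u uv uw; apply/negP => odd_uvw.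
case/orP: (Xset_symdiff_odd_tri eX eY uv uw odd_uvw).
  exact/negP/(Xset_symdiff_nonadjacent eX eY uw).
rewrite setUC in eX eY.
exact/negP/(Xset_symdiff_nonadjacent eX eY uv).
Qed.

Lemma Yset_symdiff_incident v w a b : [set v; w] \in Yset S' -> [set a; b] \in Y ->
  a \in [set v; w].
Proof.
move=> vwY' abY; apply/negPn/negP; rewrite !inE negb_or => /andP[av aw].
have abX' := subsetP Yset_sub_symdiff _ abY.
have [ab va] : a != b /\ v != a by rewrite (Yset_neq abY) eq_sym.
have vb : v != b.
  apply: contraTneq (Yset_odd_tri vwY' av aw) => vb.
  rewrite -vb in abX'; rewrite odd_triCr odd_triCl.
  by apply: (XsetP _ av abX'); rewrite eq_sym // (Yset_neq vwY').
have bT : b \in [set x | (x != v) && (x != a) && odd_tri S v a x].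
  by rewrite inE eq_sym vb eq_sym ab (Yset_odd_tri abY).
have T'_sub : [set x | (x != a) && (x != v) && odd_tri S' a v x] \subset
              [set x | (x != v) && (x != a) && odd_tri S v a x] :\ b.
  apply/subsetP => x; rewrite !inE => /andP[/andP[xa xv] odd'_avx].
  have xb : x != b.
    apply: contraTneq odd'_avx => ->; rewrite odd_triCl.
    exact: (XsetP _ ab abX' v va vb).
  have [ax vx] : a != x /\ v != x by rewrite !(eq_sym _ x).
  move: odd'_avx; rewrite odd_tri_symdiff_Yset // => /andP[odd_avx _].
  by rewrite xb xv xa odd_triCl.
have same_count : n_odd_tri S' a v = n_odd_tri S v a.
  by apply: double_inj; rewrite (Yset_n_odd_tri vwY' av aw) (Yset_n_odd_tri abY va vb).
move: (subset_leq_card T'_sub); rewrite -/(n_odd_tri S' a v) same_count.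
by rewrite /n_odd_tri (cardsD1 b) bT add1n ltnn.
Qed.

Lemma Yset_symdiff_eq0 : Y != set0 -> Yset S' = set0.
Proof.
case/set0Pn => f fY; apply/setP => e; rewrite in_set0; apply/negbTE/negP => eY'.
have /in_edgesP[v [w [vw def_e]]] := subsetP (Yset_sub_edges S') e eY'.
have /in_edgesP[a [b [ab def_f]]] := subsetP (Yset_sub_edges S) f fY.
rewrite def_e in eY'; rewrite def_f in fY.
have f_sub_e : [set a; b] \subset [set v; w].
  rewrite subUset !sub1set (Yset_symdiff_incident eY' fY).
  by rewrite setUC in fY; rewrite (Yset_symdiff_incident eY' fY).
have /eqP f_eq_e : [set a; b] == [set v; w] by rewrite eqEcard f_sub_e !cards2 ab vw.
move: (Xset_Yset_disjoint (ltnW n_ge4) (subsetP Yset_sub_symdiff _ fY)).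
by rewrite f_eq_e eY'.
Qed.

End Switching.

Theorem lemma3p5 (n : nat) (Sigma : {set {set 'I_n}}) :
  4 <= n -> Sigma \subset edges n -> Yset Sigma != set0 ->
  Xset Sigma :|: Yset Sigma = Xset (symdiff Sigma (Yset Sigma)) /\
  Yset (symdiff Sigma (Yset Sigma)) = set0.
Proof.
move=> n_ge4 _ YSigma.
by split; [rewrite Xset_symdiff | apply: Yset_symdiff_eq0].
Qed.
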